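(* Let $(s_i)_{i\in\mathbb{Z}}$ and $(t_j)_{j\in\mathbb{Z}}$ be strictly increasing bi-infinite real sequences, unbounded above and below, and let $F:\mathbb{R}^2\to\mathbb{R}^d$ have the BMSDD property with constant $L$ in each rectangle $[s_i,s_{i+1}]\times[t_j,t_{j+1}]$, $i,j\in\mathbb{Z}$. Then $F$ has the BMSDD property with constant $L$ in $\mathbb{R}^2$.
   Context: For $\sigma_1\ne\sigma_2$, $\tau_1\ne\tau_2$, $[\sigma_1,\sigma_2;\tau_1,\tau_2]F=\frac{F(\sigma_1,\tau_1)+F(\sigma_2,\tau_2)-F(\sigma_2,\tau_1)-F(\sigma_1,\tau_2)}{(\sigma_1-\sigma_2)(\tau_1-\tau_2)}$. $F$ has the BMSDD property with constant $L$ in $\Omega\subset\mathbb{R}^2$ if $\|[\sigma_1,\sigma_2;\tau_1,\tau_2]F\|_\infty\le L$ for all $\sigma_1\ne\sigma_2$, $\tau_1\ne\tau_2$ with $(\sigma_i,\tau_j)\in\Omega$ for all $i,j\in\{1,2\}$. *)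

From HB Require Import structures.
From mathcomp Require Import all_boot all_order all_algebra.
From mathcomp Require Import reals.
Set Implicit Arguments. Unset Strict Implicit. Unset Printing Implicit Defensive.
Import Order.TTheory GRing.Theory Num.Theory.
Local Open Scope ring_scope.

(* sup norm on R^d (= 0 for d = 0) *)
Definition supnorm (R : realType) (d : nat) (v : 'rV[R]_d) : R :=
  \big[Num.max/0]_(k < d) `|v ord0 k|.

Definition divdiff2 (R : realType) (d : nat) (F : R -> R -> 'rV[R]_d)
  (s1 s2 t1 t2 : R) : 'rV[R]_d :=
  ((s1 - s2) * (t1 - t2))^-1 *: (F s1 t1 + F s2 t2 - F s2 t1 - F s1 t2).

Definition BMSDD (R : realType) (d : nat) (F : R -> R -> 'rV[R]_d)
  (Omega : R -> R -> Prop) (L : R) : Prop :=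
  forall s1 s2 t1 t2 : R, s1 != s2 -> t1 != t2 ->
    Omega s1 t1 -> Omega s1 t2 -> Omega s2 t1 -> Omega s2 t2 ->
    supnorm (divdiff2 F s1 s2 t1 t2) <= L.

Definition rect (R : realType) (a b c e : R) : R -> R -> Prop :=
  fun x y => a <= x <= b /\ c <= y <= e.

(** The second difference
      D(a, b; c, e) = F(a,c) + F(b,e) - F(b,c) - F(a,e)
    is additive in each of the intervals [a,b] and [c,e] (splitting [a,b] at
    an intermediate point splits D into a sum), and the BMSDD property says
    exactly that |D(a, b; c, e)| <= L |a - b| |c - e|.  A subinterval of a
    grid strip is a finite union of subintervals of grid cells, so by the
    triangle inequality the bound propagates from the cells to every
    rectangle, first along one axis and then along the other. *)
From HB Require Import structures.
From mathcomp Require Import all_boot all_order all_algebra.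
From mathcomp Require Import reals.
From mathcomp Require Import lra ring.
Import Order.TTheory GRing.Theory Num.Theory.
Set Implicit Arguments. Unset Strict Implicit.
Local Open Scope ring_scope.

Section Supnorm.
Variables (R : realType) (d : nat).
Implicit Types (u v : 'rV[R]_d).

Lemma supnorm_ge0 v : 0 <= supnorm v.
Proof. by rewrite /supnorm; elim/big_ind: _ => // x y hx hy; rewrite le_max hx. Qed.

Lemma supnormD u v : supnorm (u + v) <= supnorm u + supnorm v.
Proof.
rewrite {1}/supnorm; elim/big_ind: _ => [|x y hx hy|k _].
- by rewrite addr_ge0 ?supnorm_ge0.
- by rewrite ge_max hx hy.
- rewrite mxE; apply: le_trans (ler_normD _ _) _.
  by apply: lerD; rewrite /supnorm (bigD1 k) //= le_max lexx.
Qed.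

Lemma supnormZ (a : R) v : supnorm (a *: v) = `|a| * supnorm v.
Proof.
rewrite /supnorm (big_morph _ (fun x y => maxr_pMr x y (normr_ge0 a)) (mulr0 _)).
by apply: eq_bigr => k _; rewrite mxE normrM.
Qed.

Lemma supnormN v : supnorm (- v) = supnorm v.
Proof. by rewrite -scaleN1r supnormZ normrN1 mul1r. Qed.

End Supnorm.

Section SecondDifference.
Variables (R : realType) (d : nat) (F : R -> R -> 'rV[R]_d).

Definition rdiff (a b c e : R) : 'rV[R]_d := F a c + F b e - F b c - F a e.

Lemma rdiff_splitl a b b' c e : rdiff a b' c e = rdiff a b c e + rdiff b b' c e.
Proof. by rewrite /rdiff; apply/rowP => k; rewrite !mxE; ring. Qed.

Lemma rdiff_splitr a b c e e' : rdiff a b c e' = rdiff a b c e + rdiff a b e e'.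
Proof. by rewrite /rdiff; apply/rowP => k; rewrite !mxE; ring. Qed.

Lemma rdiffNl a b c e : rdiff b a c e = - rdiff a b c e.
Proof. by rewrite /rdiff; apply/rowP => k; rewrite !mxE; ring. Qed.

Lemma rdiffNr a b c e : rdiff a b e c = - rdiff a b c e.
Proof. by rewrite /rdiff; apply/rowP => k; rewrite !mxE; ring. Qed.

Lemma supnorm_divdiff2 a b c e : a != b -> c != e ->
  supnorm (divdiff2 F a b c e) = supnorm (rdiff a b c e) / (`|a - b| * `|c - e|).
Proof.
move=> ab ce; rewrite /divdiff2 supnormZ normfV normrM mulrC.
by rewrite -[_ - _ - _]/(rdiff a b c e).
Qed.

Lemma BMSDDE (Omega : R -> R -> Prop) (L : R) :
  BMSDD F Omega L <->
  (forall a b c e, a != b -> c != e ->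
     Omega a c -> Omega a e -> Omega b c -> Omega b e ->
     supnorm (rdiff a b c e) <= L * `|a - b| * `|c - e|).
Proof.
have pos (a b c e : R) : a != b -> c != e -> 0 < `|a - b| * `|c - e|.
  by move=> ab ce; apply: mulr_gt0; rewrite normr_gt0 subr_eq0.
split=> hF a b c e ab ce hac hae hbc hbe.
  have := hF a b c e ab ce hac hae hbc hbe.
  by rewrite supnorm_divdiff2 // ler_pdivrMr ?pos // mulrA.
by rewrite supnorm_divdiff2 // ler_pdivrMr ?pos // mulrA hF.
Qed.

Variable L : R.

Lemma rdiff_le_splitl a b b' c e :
  supnorm (rdiff a b c e) <= L * (b - a) * (e - c) ->
  supnorm (rdiff b b' c e) <= L * (b' - b) * (e - c) ->
  supnorm (rdiff a b' c e) <= L * (b' - a) * (e - c).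
Proof.
move=> h1 h2; rewrite (rdiff_splitl _ b); apply: le_trans (supnormD _ _) _.
have -> : L * (b' - a) * (e - c) = L * (b - a) * (e - c) + L * (b' - b) * (e - c)
  by ring.
exact: lerD.
Qed.

Lemma rdiff_le_splitr a b c e e' :
  supnorm (rdiff a b c e) <= L * (b - a) * (e - c) ->
  supnorm (rdiff a b e e') <= L * (b - a) * (e' - e) ->
  supnorm (rdiff a b c e') <= L * (b - a) * (e' - c).
Proof.
move=> h1 h2; rewrite (rdiff_splitr _ _ _ e); apply: le_trans (supnormD _ _) _.
have -> : L * (b - a) * (e' - c) = L * (b - a) * (e - c) + L * (b - a) * (e' - e)
  by ring.
exact: lerD.
Qed.

Lemma rdiff_le_dist :
  (forall a b c e, a < b -> c < e ->
     supnorm (rdiff a b c e) <= L * (b - a) * (e - c)) ->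
  forall a b c e, a != b -> c != e ->
    supnorm (rdiff a b c e) <= L * `|a - b| * `|c - e|.
Proof.
move=> hF a b c e ab ce.
wlog ltab : a b ab / a < b.
  move=> W; case/orP: (lt_total ab) => [|ba]; first exact: W.
  by rewrite (distrC a) rdiffNl supnormN W // eq_sym.
wlog ltce : c e ce / c < e.
  move=> W; case/orP: (lt_total ce) => [|ec]; first exact: W.
  by rewrite (distrC c) rdiffNr supnormN W // eq_sym.
by rewrite distrC (distrC c) !gtr0_norm ?subr_gt0 // hF.
Qed.

End SecondDifference.

Section Grid.
Variables (R : realType) (s : int -> R).
Hypothesis s_incr : forall i : int, s i < s (i + 1).
Hypothesis s_ub : forall x : R, exists i : int, x < s i.
Hypothesis s_lb : forall x : R, exists i : int, s i < x.

Lemma grid_le_addn i (n : nat) : s i <= s (i + n%:Z).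
Proof.
elim: n => [|n IH]; first by rewrite addr0.
by apply: (le_trans IH); rewrite -addn1 PoszD addrA ltW.
Qed.

Lemma grid_cover a b : a <= b -> exists i (n : nat), s i <= a /\ b <= s (i + n%:Z).
Proof.
move=> ab; have [i hi] := s_lb a; have [j hj] := s_ub b.
have ij : i <= j.
  rewrite leNgt; apply/negP => ji.
  have := grid_le_addn j `|i - j|%N.
  rewrite gez0_abs ?subr_ge0 ?(ltW ji) // [j + _]addrC subrK; lra.
exists i, `|j - i|%N; rewrite gez0_abs ?subr_ge0 // [i + _]addrC subrK.
by split; apply: ltW; last exact: le_lt_trans hj.
Qed.

Variable P : R -> R -> Prop.
Hypothesis P_trans : forall a b c, a < b -> b < c -> P a b -> P b c -> P a c.
Hypothesis P_cell : forall i a b, s i <= a -> a < b -> b <= s (i + 1) -> P a b.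

Lemma grid_interval_ind a b : a < b -> P a b.
Proof.
move=> ab; have [i [n [ia bn]]] := grid_cover (ltW ab).
elim: n i a b ab ia bn => [|n IH] i a b ab ia.
  by rewrite addr0 => bn; lra.
have -> : i + n.+1%:Z = (i + 1) + n%:Z by rewrite -addn1 PoszD addrA addrAC.
move=> {}bn; have [bi|ib] := leP b (s (i + 1)); first exact: (P_cell ia).
have [ia'|ai] := leP (s (i + 1)) a; first exact: (IH (i + 1)).
apply: (P_trans ai ib); first exact: (P_cell ia).
exact: (IH (i + 1)).
Qed.

End Grid.

Theorem lemma5 (R : realType) (d : nat) (s t : int -> R)
  (F : R -> R -> 'rV[R]_d) (L : R)
  (s_incr : forall i : int, s i < s (i + 1))
  (t_incr : forall j : int, t j < t (j + 1))
  (s_ub : forall x : R, exists i : int, x < s i)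
  (s_lb : forall x : R, exists i : int, s i < x)
  (t_ub : forall y : R, exists j : int, y < t j)
  (t_lb : forall y : R, exists j : int, t j < y)
  (hF : forall i j : int,
      BMSDD F (rect (s i) (s (i + 1)) (t j) (t (j + 1))) L) :
  BMSDD F (fun _ _ => True) L.
Proof.
have cell_bound i j a b c e : s i <= a -> a < b -> b <= s (i + 1) ->
    t j <= c -> c < e -> e <= t (j + 1) ->
    supnorm (rdiff F a b c e) <= L * (b - a) * (e - c).
  move=> *; have := proj1 (BMSDDE F _ L) (hF i j) a b c e.
  rewrite distrC (distrC c) !gtr0_norm ?subr_gt0 //.
  by apply; rewrite ?lt_eqF // /rect; lra.
apply/BMSDDE => a b c e ab ce _ _ _ _; move: a b c e ab ce.
apply: rdiff_le_dist => a b c e ab; move: c e.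
apply: (grid_interval_ind t_incr t_ub t_lb
  (P := fun c e => supnorm (rdiff F a b c e) <= L * (b - a) * (e - c)))
  => [c1 c2 c3 _ _|j *]; first exact: rdiff_le_splitr.
move: a b ab; apply: (grid_interval_ind s_incr s_ub s_lb)
  => [a1 a2 a3 _ _|i *]; first exact: rdiff_le_splitl.
exact: (cell_bound i j).
Qed.
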